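(* Let $R$ be a ring, $G$ a group and $A$ an $RG$-module. Then $\mathbf{Coc}_{R\text{-mmx}}(G) = \{x \in G \mid A/C_A(x) \text{ is a minimax } R\text{-module}\}$ is a normal subgroup of $G$.
   Context: An $R$-module is minimax if it has a finite series of submodules whose factors are each noetherian or artinian. For $x \in G$, $C_A(x) = \{a\in A \mid ax = a\}$. *)

From HB Require Import structures.
From mathcomp Require Import all_boot all_algebra.

Set Implicit Arguments.
Unset Strict Implicit.
Unset Printing Implicit Defensive.

Import GRing.Theory.
Local Open Scope ring_scope.

Section Modules.
Variables (R : pzRingType) (M : lmodType R).

Definition incl (U V : M -> Prop) : Prop := forall x, U x -> V x.

(* R-submodule of M. (Closure under opposites follows from scaling by -1.) *)
Definition submodule (U : M -> Prop) : Prop :=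
  [/\ U 0, (forall u v, U u -> U v -> U (u + v))
     & (forall (r : R) u, U u -> U (r *: u))].

(* Submodules of
   U/V are identified (correspondence theorem) with submodules W of M
   such that V <= W <= U. *)
Definition noetherian_factor (V U : M -> Prop) : Prop :=
  forall W : nat -> M -> Prop,
    (forall n, [/\ submodule (W n), incl V (W n) & incl (W n) U]) ->
    (forall n, incl (W n) (W n.+1)) ->
    exists N, forall n, (N <= n)%N -> incl (W n) (W N).

Definition artinian_factor (V U : M -> Prop) : Prop :=
  forall W : nat -> M -> Prop,
    (forall n, [/\ submodule (W n), incl V (W n) & incl (W n) U]) ->
    (forall n, incl (W n.+1) (W n)) ->
    exists N, forall n, (N <= n)%N -> incl (W N) (W n).

Definition minimax_module : Prop :=
  exists (n : nat) (S : nat -> M -> Prop),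
    [/\ forall i, submodule (S i),
        forall x, S 0%N x <-> x = 0,
        forall x, S n x
      & forall i, (i < n)%N ->
          incl (S i) (S i.+1) /\
          (noetherian_factor (S i) (S i.+1) \/ artinian_factor (S i) (S i.+1))].

End Modules.

(* The quotient R-module A/C (C a submodule of A) is minimax: there is an
   R-module M and a surjective R-linear map f : A -> M with kernel C
   (i.e. M is A/C up to isomorphism) such that M is minimax. *)
Definition quotient_minimax (R : pzRingType) (A : lmodType R) (C : A -> Prop)
  : Prop :=
  exists (M : lmodType R) (f : {linear A -> M}),
    [/\ forall m : M, exists a : A, f a = m,
        forall a : A, f a = 0 <-> C a
      & minimax_module M].

(* A is an RG-module: a (right) action of the group G on the R-module A by
   R-linear maps, written a |-> act a g (= a g). *)
Definition RG_module (R : pzRingType) (G : groupType) (A : lmodType R)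
  (act : A -> G -> A) : Prop :=
  [/\ forall a, act a 1%g = a,
      forall a (g h : G), act a (g * h)%g = act (act a g) h
    & forall (g : G) (r : R) (a b : A), act (r *: a + b) g = r *: act a g + act b g].

Definition centralizer_in (R : pzRingType) (G : groupType) (A : lmodType R)
  (act : A -> G -> A) (x : G) : A -> Prop := fun a => act a x = a.

Definition Coc_mmx (R : pzRingType) (G : groupType) (A : lmodType R)
  (act : A -> G -> A) : G -> Prop :=
  fun x => quotient_minimax (centralizer_in act x).

Definition normal_subgroup (G : groupType) (S : G -> Prop) : Prop :=
  [/\ S 1%g,
      forall x y, S x -> S y -> S (x * y)%g,
      forall x, S x -> S (x^-1)%g
    & forall x g, S x -> S (x ^ g)%g].

(* For x in G, A/C_A(x) is isomorphic to the image of the R-linear map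
   a |-> a x - a, so x lies in Coc(G) iff C_A(x) <= A has a refinement with
   noetherian-or-artinian factors.  Such refinements pass to submodules and
   quotients (the isomorphism theorems embed the submodule lattice of each new
   factor into that of an old one) and compose.  Since
   C_A(x) /\ C_A(y) <= C_A(xy), the module A/C_A(xy) is a quotient of
   A/(C_A(x) /\ C_A(y)), an extension of A/C_A(y) by a submodule of A/C_A(x);
   inverses have the same centralizer, and conjugation by g moves C_A(x) to
   C_A(x^g) by the linear automorphism a |-> a g^-1. *)

From HB Require Import structures.
From mathcomp Require Import all_boot all_algebra.
From mathcomp Require Import boolp classical_sets.

Set Implicit Arguments.
Unset Strict Implicit.
Unset Printing Implicit Defensive.

Import GRing.Theory.
Local Open Scope ring_scope.
Local Open Scope classical_set_scope.

Section Submodules.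
Variables (R : pzRingType) (M : lmodType R).
Implicit Types (P Q V U W : set M).

Lemma submodule0 P : submodule P -> P 0.
Proof. by case. Qed.

Lemma submoduleD P u v : submodule P -> P u -> P v -> P (u + v).
Proof. by case=> _ + _; apply. Qed.

Lemma submoduleZ P r u : submodule P -> P u -> P (r *: u).
Proof. by case=> _ _; apply. Qed.

Lemma submoduleB P u v : submodule P -> P u -> P v -> P (u - v).
Proof. by move=> hP hu hv; rewrite -scaleN1r; apply: submoduleD (submoduleZ _ hP hv). Qed.

Lemma submoduleI P Q : submodule P -> submodule Q -> submodule (P `&` Q).
Proof.
move=> hP hQ; split=> [|u v [? ?] [? ?]|r u [? ?]].
- by split; apply: submodule0.
- by split; apply: submoduleD.
- by split; apply: submoduleZ.
Qed.

Definition submod_sum P Q := [set u + v | u in P & v in Q].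

Lemma submodule_sum P Q : submodule P -> submodule Q -> submodule (submod_sum P Q).
Proof.
move=> hP hQ; split.
- by exists 0; [apply: submodule0 | exists 0; [apply: submodule0 | rewrite addr0]].
- move=> _ _ [u hu [v hv <-]] [u' hu' [v' hv' <-]].
  exists (u + u'); first exact: submoduleD.
  by exists (v + v'); [apply: submoduleD | rewrite addrACA].
- move=> r _ [u hu [v hv <-]].
  exists (r *: u); first exact: submoduleZ.
  by exists (r *: v); [apply: submoduleZ | rewrite scalerDr].
Qed.

Lemma submod_suml P Q x : submodule Q -> P x -> submod_sum P Q x.
Proof. by move=> hQ hx; exists x => //; exists 0; [apply: submodule0 | rewrite addr0]. Qed.

Lemma submod_sumr P Q x : submodule P -> Q x -> submod_sum P Q x.
Proof. by move=> hP hx; exists 0; [apply: submodule0 | exists x => //; rewrite add0r]. Qed.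

Definition between V U W := [/\ submodule W, V `<=` W & W `<=` U].

Definition noeth_or_art V U := noetherian_factor V U \/ artinian_factor V U.

End Submodules.

Section LinearImages.
Variables (R : pzRingType) (A M : lmodType R) (f : {linear A -> M}).

Lemma submodule_image W : submodule W -> submodule (f @` W).
Proof.
move=> hW; split.
- by exists 0; [apply: submodule0 | rewrite linear0].
- by move=> _ _ [a ha <-] [b hb <-]; exists (a + b); [apply: submoduleD | rewrite linearD].
- by move=> r _ [a ha <-]; exists (r *: a); [apply: submoduleZ | rewrite linearZ].
Qed.

Lemma submodule_preimage W : submodule W -> submodule (f @^-1` W).
Proof.
move=> hW; split=> [|u v|r u] /=.
- by rewrite linear0; apply: submodule0.
- by rewrite linearD; apply: submoduleD.
- by rewrite linearZ; apply: submoduleZ.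
Qed.

End LinearImages.

Section Embeddings.
Variables (R : pzRingType) (M M' : lmodType R).

(* [F] embeds the lattice of submodules of [U'/V'] into that of [U/V]. *)
Definition interval_embedding (V' U' : set M') (V U : set M)
    (F : set M' -> set M) :=
  (forall W, between V' U' W -> between V U (F W)) /\
  (forall W1 W2, between V' U' W1 -> between V' U' W2 ->
     F W1 `<=` F W2 <-> W1 `<=` W2).

Variables (V U : set M) (V' U' : set M') (F : set M' -> set M).
Hypothesis embF : interval_embedding V' U' V U F.

Lemma noetherian_factor_embed : noetherian_factor V U -> noetherian_factor V' U'.
Proof.
case: embF => Fb Fle hN W hW hW_incr.
have Wb n : between V' U' (W n) by case: (hW n).
have [N hN'] := hN (fun n => F (W n)) (fun n => Fb _ (Wb n))
  (fun n => (Fle _ _ (Wb n) (Wb n.+1)).2 (hW_incr n)).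
by exists N => n hn; apply/(Fle _ _ (Wb n) (Wb N))/hN'.
Qed.

Lemma artinian_factor_embed : artinian_factor V U -> artinian_factor V' U'.
Proof.
case: embF => Fb Fle hA W hW hW_decr.
have Wb n : between V' U' (W n) by case: (hW n).
have [N hN'] := hA (fun n => F (W n)) (fun n => Fb _ (Wb n))
  (fun n => (Fle _ _ (Wb n.+1) (Wb n)).2 (hW_decr n)).
by exists N => n hn; apply/(Fle _ _ (Wb N) (Wb n))/hN'.
Qed.

Lemma noeth_or_art_embed : noeth_or_art V U -> noeth_or_art V' U'.
Proof.
by case=> h; [left; apply: noetherian_factor_embed | right; apply: artinian_factor_embed].
Qed.

End Embeddings.

Section IsomorphismTheorems.
Variables (R : pzRingType) (M : lmodType R) (S T : set M).
Hypotheses (hS : submodule S) (hT : submodule T) (hST : S `<=` T).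

(* Second isomorphism theorem: [(T & K)/(S & K)] is a submodule of [T/S]. *)
Lemma sum_embedding K : submodule K ->
  interval_embedding (S `&` K) (T `&` K) S T (fun W => submod_sum W S).
Proof.
move=> hK; split=> [W [hW _ hWT]|W1 W2 [_ _ hW1T] [hW2 hSKW2 hW2T]].
  split; [exact: submodule_sum | by move=> x; apply: submod_sumr |].
  by move=> _ [u /hWT [hu _] [v /hST hv <-]]; apply: submoduleD.
split=> [h12 w hw|h12 _ [u hu [v hv <-]]]; last by exists u; [apply: h12 | exists v].
have [u hu [v hv ew]] := h12 w (submod_suml hS hw).
have hvK : K v.
  have -> : v = w - u by rewrite -ew addrC addKr.
  exact: submoduleB hK (hW1T _ hw).2 (hW2T _ hu).2.
by rewrite -ew; apply: submoduleD hW2 hu (hSKW2 _ _).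
Qed.

(* Third isomorphism theorem: [(T + L)/(S + L)] is a quotient of [T/S]. *)
Lemma setI_embedding L : submodule L ->
  interval_embedding (submod_sum S L) (submod_sum T L) S T (fun W => W `&` T).
Proof.
move=> hL; split=> [W [hW hSLW _]|W1 W2 [hW1 hSLW1 hW1T] [hW2 hSLW2 _]].
  split; [exact: submoduleI | | by move=> x []].
  by move=> x hx; split; [apply: hSLW; apply: submod_suml | apply: hST].
split=> [h12 w hw|h12 x [hx hxT]]; last by split; [apply: h12|].
have [u hu [v hv ew]] := hW1T w hw.
have hvS : submod_sum S L v by apply: submod_sumr.
have hu2 : W2 u.
  suff /h12 [] : (W1 `&` T) u by [].
  split=> //.
  have -> : u = w - v by rewrite -ew addrK.
  exact: submoduleB hW1 hw (hSLW1 _ hvS).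
by rewrite -ew; apply: submoduleD hW2 hu2 (hSLW2 _ hvS).
Qed.

End IsomorphismTheorems.

Section LinearEmbeddings.
Variables (R : pzRingType) (A M : lmodType R) (f : {linear A -> M}).

Lemma image_embedding (S T : set M) : submodule S -> (forall m, exists a, f a = m) ->
  interval_embedding (f @^-1` S) (f @^-1` T) S T (image^~ f).
Proof.
move=> hS fsurj; split=> [W [hW hSW hWT]|W1 W2 [_ _ _] [hW2 hSW2 _]].
  split; [exact: submodule_image | | by move=> _ [a /hWT ha <-]].
  by move=> m hm; have [a ea] := fsurj m; exists a => //; apply: hSW; rewrite /= ea.
split=> [h12 w hw|h12 _ [a ha <-]]; last by exists a => //; apply: h12.
have [u hu eu] := h12 (f w) (ex_intro2 _ _ w hw erefl).
have -> : w = (w - u) + u by rewrite subrK.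
apply: submoduleD hW2 _ hu; apply: hSW2.
by rewrite /= linearB eu subrr; apply: submodule0.
Qed.

Lemma preimage_embedding (S T : set A) : submodule T -> S `<=` T ->
  interval_embedding (f @` S) (f @` T) S T (fun W => f @^-1` W `&` T).
Proof.
move=> hT hST; split=> [W [hW hSW _]|W1 W2 [_ _ hW1T] [_ _ _]].
  split; [exact: submoduleI (submodule_preimage f hW) hT | | by move=> x []].
  by move=> a ha; split; [apply: hSW; exists a | apply: hST].
split=> [h12 _ /[dup] /hW1T [a ha <-] hw|h12 a [ha haT]]; last by split; [apply: h12|].
by case: (h12 a (conj hw ha)).
Qed.

End LinearEmbeddings.

Section MinimaxSeries.
Variables (R : pzRingType) (M : lmodType R).
Implicit Types (V U K X : set M).

(* [U/V] is minimax, for submodules [V <= U] of [M]. *)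
Definition minimax_series V U :=
  exists (n : nat) (S : nat -> set M),
    [/\ forall i, submodule (S i), S 0%N = V, S n = U
      & forall i, (i < n)%N -> S i `<=` S i.+1 /\ noeth_or_art (S i) (S i.+1)].

Lemma minimax_moduleE : minimax_module M <-> minimax_series [set 0] [set: M].
Proof.
split=> [[n [S [hS hS0 hSn hstep]]]|[n [S [hS hS0 hSn hstep]]]].
  exists n, S; split=> //.
  - by apply/seteqP; split=> x; [exact: (hS0 x).1 | exact: (hS0 x).2].
  - by apply/seteqP; split=> x // _; exact: hSn.
by exists n, S; split=> // x; rewrite ?hS0 ?hSn.
Qed.

Lemma minimax_series_refl U : submodule U -> minimax_series U U.
Proof. by exists 0%N, (fun _ => U). Qed.

Lemma minimax_seriesI V U K : submodule K ->
  minimax_series V U -> minimax_series (V `&` K) (U `&` K).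
Proof.
move=> hK [n [S [hS <- <- hstep]]].
exists n, (fun i => S i `&` K); split=> [i|//|//|i /hstep [hinc hfac]].
  exact: submoduleI.
split; first by move=> x [hx hxK]; split; [apply: hinc|].
exact: noeth_or_art_embed (sum_embedding (hS i) (hS i.+1) hinc hK) hfac.
Qed.

Lemma minimax_series_quotient V V' U : submodule V' -> V `<=` V' -> V' `<=` U ->
  minimax_series V U -> minimax_series V' U.
Proof.
move=> hV' hVV' hV'U [n [S [hS hS0 hSn hstep]]].
exists n, (fun i => submod_sum (S i) V'); split=> [i||| i /hstep [hinc hfac]].
- exact: submodule_sum.
- apply/seteqP; split=> [_ [u hu [v hv <-]]|x hx]; last exact: submod_sumr.
  by apply: submoduleD hV' _ hv; apply/hVV'; rewrite -hS0.
- apply/seteqP; split=> [_ [u hu [v hv <-]]|x hx]; last by apply: submod_suml; rewrite ?hSn.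
  by rewrite -hSn; apply: submoduleD (hS n) hu _; rewrite hSn; apply: hV'U.
split; first by move=> _ [u hu [v hv <-]]; exists u; [apply: hinc | exists v].
exact: noeth_or_art_embed (setI_embedding (hS i) (hS i.+1) hinc hV') hfac.
Qed.

Lemma minimax_series_trans V U X :
  minimax_series V U -> minimax_series U X -> minimax_series V X.
Proof.
move=> [n [S [hS hS0 hSn hSstep]]] [m [T [hT hT0 hTm hTstep]]].
exists (n + m)%N, (fun i => if (i < n)%N then S i else T (i - n)%N).
split=> [i|||i hi]; first by case: ifP.
- by case: (posnP n) => [n0|//]; rewrite n0 subn0 hT0 -hSn n0.
- by rewrite ltnNge leq_addr addKn.
case: (ltngtP i.+1 n) => [hi1|hni|hin].
- exact: hSstep (ltnW hi1).
- by rewrite subSn //; apply: hTstep; rewrite ltn_subLR // addnC.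
- by rewrite hin subnn hT0 -hSn -hin; apply: hSstep; rewrite -hin.
Qed.

End MinimaxSeries.

Section LinearMaps.
Variables (R : pzRingType) (A M : lmodType R) (f : {linear A -> M}).

Lemma minimax_series_preimage (V U : set M) : (forall m, exists a, f a = m) ->
  minimax_series V U -> minimax_series (f @^-1` V) (f @^-1` U).
Proof.
move=> fsurj [n [S [hS <- <- hstep]]].
exists n, (fun i => f @^-1` S i); split=> [i|//|//|i /hstep [hinc hfac]].
  exact: submodule_preimage.
split; first by move=> a; apply: hinc.
exact: noeth_or_art_embed (image_embedding (S i.+1) (hS i) fsurj) hfac.
Qed.

Lemma minimax_series_image (V U : set A) :
  minimax_series V U -> minimax_series (f @` V) (f @` U).
Proof.
move=> [n [S [hS <- <- hstep]]].
exists n, (fun i => f @` S i); split=> [i|//|//|i /hstep [hinc hfac]].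
  exact: submodule_image.
split; first by move=> _ [a ha <-]; exists a => //; apply: hinc.
exact: noeth_or_art_embed (preimage_embedding f (hS i.+1) hinc) hfac.
Qed.

End LinearMaps.

Section LinearRange.
Variables (R : pzRingType) (A B : lmodType R) (g : {linear A -> B}).

Definition in_range : pred B := fun b => `[< exists a, g a = b >].

Lemma in_range_subsemimod_closed : subsemimod_closed in_range.
Proof.
split; first split.
- by apply/asboolP; exists 0; rewrite linear0.
- by move=> _ _ /asboolP [a <-] /asboolP [b <-]; apply/asboolP; exists (a + b); rewrite linearD.
- by move=> r _ /asboolP [a <-]; apply/asboolP; exists (r *: a); rewrite linearZ.
Qed.

HB.instance Definition _ :=
  GRing.isSubmodClosed.Build R B in_range in_range_subsemimod_closed.

(* The range of [g], as an [R]-module: it is isomorphic to [A] modulo the kernel of [g]. *)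
Definition range_mod := {b : B | in_range b}.
HB.instance Definition _ := [isSub of range_mod for (@sval B in_range)].
HB.instance Definition _ := [Choice of range_mod by <:].
HB.instance Definition _ := [SubChoice_isSubLmodule of range_mod by <:].

Definition corestr (a : A) : range_mod := exist _ (g a) (introT (asboolP _) (ex_intro _ a erefl)).

Lemma corestr_is_linear : linear corestr.
Proof. by move=> r a b; apply: val_inj; rewrite /= linearP. Qed.

HB.instance Definition _ :=
  GRing.isLinear.Build R A range_mod *:%R corestr corestr_is_linear.

Lemma corestr_surj (m : range_mod) : exists a, corestr a = m.
Proof. by case: m => b /[dup] /asboolP [a ea] hb; exists a; apply: val_inj. Qed.

Lemma corestr_eq0 a : corestr a = 0 <-> g a = 0.
Proof. by split=> [/(congr1 val)|ha] //; apply: val_inj. Qed.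

Lemma quotient_minimax_kernel (C : set A) : (forall a, g a = 0 <-> C a) ->
  quotient_minimax C <-> minimax_series C [set: A].
Proof.
move=> kerC; split=> [[M [f [fsurj fker /minimax_moduleE hM]]]|hC].
  have -> : C = f @^-1` [set 0] by apply/seteqP; split=> a /fker.
  by rewrite -(preimage_setT f); apply: minimax_series_preimage.
exists range_mod, corestr; split.
- exact: corestr_surj.
- by move=> a; rewrite corestr_eq0.
apply/minimax_moduleE.
have <- : corestr @` C = [set 0].
  apply/seteqP; split=> [_ [a /kerC/corestr_eq0 ha <-] //|_ ->].
  by exists 0; [apply/kerC; rewrite linear0 | rewrite linear0].
have <- : corestr @` [set: A] = [set: range_mod].
  by apply/seteqP; split=> // m _; have [a <-] := corestr_surj m; exists a.
exact: minimax_series_image.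
Qed.

End LinearRange.

Section CentralizersOfRGModule.
Variables (R : pzRingType) (G : groupType) (A : lmodType R) (act : A -> G -> A).
Hypothesis actA : RG_module act.

Local Notation C := (centralizer_in act).

Lemma act1g a : act a 1%g = a.
Proof. by case: actA. Qed.

Lemma actMg a (g h : G) : act a (g * h)%g = act (act a g) h.
Proof. by case: actA. Qed.

Lemma actKg (g : G) a : act (act a g) g^-1%g = a.
Proof. by rewrite -actMg mulgV act1g. Qed.

Lemma actVKg (g : G) a : act (act a g^-1%g) g = a.
Proof. by rewrite -actMg mulVg act1g. Qed.

Lemma act_is_linear (g : G) : linear (act^~ g).
Proof. by case: actA => _ _ + r a b; apply. Qed.

Definition act_lin (g : G) : {linear A -> A} :=
  HB.pack (act^~ g) (GRing.isLinear.Build R A A *:%R (act^~ g) (act_is_linear g)).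

Lemma act_sub_is_linear (x : G) : linear (fun a => act a x - a).
Proof.
by move=> r a b; rewrite (act_is_linear x) scalerBr opprD addrACA.
Qed.

Definition act_sub (x : G) : {linear A -> A} :=
  HB.pack (fun a => act a x - a)
    (GRing.isLinear.Build R A A *:%R _ (act_sub_is_linear x)).

Lemma act0g (g : G) : act 0 g = 0.
Proof. exact: linear0 (act_lin g). Qed.

Lemma actDg (g : G) a b : act (a + b) g = act a g + act b g.
Proof. exact: (linearD (act_lin g) a b). Qed.

Lemma actZg (g : G) r a : act (r *: a) g = r *: act a g.
Proof. exact: (linearZ_LR (act_lin g) r a). Qed.

Lemma centralizer_submodule x : submodule (C x).
Proof.
rewrite /centralizer_in; split=> [|u v hu hv|r u hu].
- exact: act0g.
- by rewrite actDg hu hv.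
- by rewrite actZg hu.
Qed.

Lemma Coc_mmxE x : Coc_mmx act x <-> minimax_series (C x) [set: A].
Proof.
apply: (quotient_minimax_kernel (g := act_sub x)) => a.
by split=> [/subr0_eq|/= ->]; last exact: subrr.
Qed.

Lemma centralizer1 : C 1%g = [set: A].
Proof. by apply/seteqP; split=> // a _; apply: act1g. Qed.

Lemma centralizerM x y : C x `&` C y `<=` C (x * y)%g.
Proof. by move=> a [hx hy]; rewrite /centralizer_in actMg hx hy. Qed.

Lemma centralizerV x : C x^-1%g = C x.
Proof.
apply/seteqP; split=> a ha; rewrite /centralizer_in.
- by rewrite -{1}ha actVKg.
- by rewrite -{1}ha actKg.
Qed.

Lemma centralizerJ x g : C (x ^ g)%g = act_lin g^-1 @^-1` C x.
Proof.
apply/seteqP; split=> a; rewrite /centralizer_in /= conjgE !actMg => ha.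
- by rewrite -[in RHS]ha actKg.
- by rewrite ha actVKg.
Qed.

Lemma Coc_mmx1 : Coc_mmx act 1%g.
Proof. by apply/Coc_mmxE; rewrite centralizer1; apply: minimax_series_refl. Qed.

Lemma Coc_mmxM x y : Coc_mmx act x -> Coc_mmx act y -> Coc_mmx act (x * y)%g.
Proof.
move=> /Coc_mmxE hx /Coc_mmxE hy; apply/Coc_mmxE.
have := minimax_seriesI (centralizer_submodule y) hx; rewrite setTI => hxy.
apply: minimax_series_quotient (minimax_series_trans hxy hy) => //.
- exact: centralizer_submodule.
- exact: centralizerM.
Qed.

Lemma Coc_mmxV x : Coc_mmx act x -> Coc_mmx act x^-1%g.
Proof. by rewrite /Coc_mmx centralizerV. Qed.

Lemma Coc_mmxJ x g : Coc_mmx act x -> Coc_mmx act (x ^ g)%g.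
Proof.
move=> /Coc_mmxE hx; apply/Coc_mmxE; rewrite centralizerJ -(preimage_setT (act_lin g^-1)).
by apply: minimax_series_preimage hx => a; exists (act a g); apply: actKg.
Qed.

End CentralizersOfRGModule.

Theorem corollary2p4 (R : pzRingType) (G : groupType) (A : lmodType R)
  (act : A -> G -> A) :
  RG_module act -> normal_subgroup (Coc_mmx act).
Proof.
move=> actA; split.
- exact: Coc_mmx1.
- exact: Coc_mmxM.
- exact: Coc_mmxV.
- exact: Coc_mmxJ.
Qed.
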